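(* Let $\Gamma$ be an oriented hypergraph with $A\neq\mathbf 0$ and strong coloring number $\chi=\chi(\Gamma)$, and suppose $\chi=\dfrac{\lambda_N-\lambda_1}{\lambda_N-1}$. Let $h$ be any eigenfunction of $L$ with eigenvalue $\lambda_1$, and let $V_1,\dots,V_\chi$ be the color classes of any proper strong $\chi$-coloring. Then: (1) $\operatorname{supp}(h)\cap V_i\neq\varnothing$ for all $1\le i\le\chi$; (2) $S^h_{ij}\ge 0$ for all $1\le i<j\le\chi$; (3) for all $1\le i<j\le\chi$, $\mathrm{RQ}(h_{ij})=\lambda_N=\dfrac{\chi-\lambda_1}{\chi-1}$, and $h_{ij}$ is an eigenfunction of $L$ with eigenvalue $\lambda_N$. Consequently the multiplicity $m_\Gamma(\lambda_N)$ of $\lambda_N=(\chi-\lambda_1)/(\chi-1)$ is at least $\chi-1$, and this inequality is strict if $m_\Gamma(\lambda_1)>1$.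
   Context: An oriented hypergraph $\Gamma=(V,E,\varphi)$ consists of a finite vertex set $V$ with $|V|=N$, an edge set $E\subseteq\mathcal P(V)$, and a function $\varphi\colon V\times E\to\{-1,0,1\}$ with $\varphi(v,e)\neq 0$ iff $v\in e$. Two vertices $v,w\in e$ are co-oriented in $e$ if $\varphi(v,e)=\varphi(w,e)$ and anti-oriented in $e$ if $\varphi(v,e)=-\varphi(w,e)$. The degree is $\deg v=|\{e\in E: v\in e\}|$; we assume every vertex has degree at least $1$, and $D=\mathrm{diag}(\deg v)_{v\in V}$. The adjacency matrix $A$ is the $N\times N$ matrix with $A_{v,v}=0$ and, for $v\neq w$, $A_{v,w}=(\#\text{edges in which } v,w \text{ are anti-oriented})-(\#\text{edges in which } v,w \text{ are co-oriented})$. The normalized Laplacian is $L=\mathrm{Id}-D^{-1}A$; it is self-adjoint for $\langle f,g\rangle=\sum_{v}\deg v\, f(v)g(v)$ on functions $V\to\mathbb R$, with (real) eigenvalues $\lambda_1\le\dots\le\lambda_N$; $m_\Gamma(\lambda)$ denotes the multiplicity of $\lambda$. The Rayleigh quotient of $f\neq0$ is $\mathrm{RQ}(f)=\langle Lf,f\rangle/\langle f,f\rangle$. A proper strong $k$-coloring is a map $V\to\{1,\dots,k\}$ such that any two distinct vertices in a common edge receive different colors; $\chi(\Gamma)$ is the least such $k$. For a function $h\colon V\to\mathbb R$ and color classes $V_1,\dots,V_\chi$, define $S^h_{ij}=\sum_{v\in V_i,\,w\in V_j}A_{v,w}h(v)h(w)$, and define $h_{ij}\colon V\to\mathbb R$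 by $h_{ij}(v)=h(v)$ if $v\in V_i$, $h_{ij}(v)=-h(v)$ if $v\in V_j$, and $h_{ij}(v)=0$ otherwise. *)

From HB Require Import structures.
From mathcomp Require Import all_boot all_order all_algebra.
From mathcomp Require Import reals.
Set Implicit Arguments. Unset Strict Implicit. Unset Printing Implicit Defensive.
Import Order.TTheory GRing.Theory Num.Theory.
Local Open Scope ring_scope.

(* An oriented hypergraph on the vertex set V = 'I_n (N = n vertices):
   an edge set E ⊆ P(V) and an incidence function phi : V × E -> {-1,0,1}. *)
Record ohg (n : nat) := OHG {
  edges  : {set {set 'I_n}};
  orient : 'I_n -> {set 'I_n} -> int }.

Definition deg n (G : ohg n) (v : 'I_n) : nat := #|[set e in edges G | v \in e]|.

Definition wf_ohg n (G : ohg n) : Prop :=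
  (forall v e, e \in edges G -> orient G v e \in [:: -1; 0; 1]%R) /\
  (forall v e, e \in edges G -> (orient G v e != 0) = (v \in e)) /\
  (forall v, (1 <= deg G v)%N).

Section Spectral.
Variable R : realType.
Variable n : nat.
Variable G : ohg n.

Definition adj : 'M[R]_n :=
  \matrix_(v, w) (if v == w then 0 else
     (#|[set e in edges G | [&& v \in e, w \in e & orient G v e == - orient G w e]]|%:R
    - #|[set e in edges G | [&& v \in e, w \in e & orient G v e == orient G w e]]|%:R)).

Definition degmx : 'M[R]_n := diag_mx (\row_v (deg G v)%:R).

Definition laplacian : 'M[R]_n := 1%:M - invmx degmx *m adj.

Definition ip (f g : 'cV[R]_n) : R := \sum_v (deg G v)%:R * f v 0 * g v 0.

Definition RQ (f : 'cV[R]_n) : R := ip (laplacian *m f) f / ip f f.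

Definition is_eigenfun (f : 'cV[R]_n) (l : R) : Prop :=
  f != 0 /\ laplacian *m f = l *: f.

Definition is_eigenvalue (l : R) : Prop := exists f, is_eigenfun f l.

Definition is_min_eigenvalue (l : R) : Prop :=
  is_eigenvalue l /\ forall m, is_eigenvalue m -> l <= m.
Definition is_max_eigenvalue (l : R) : Prop :=
  is_eigenvalue l /\ forall m, is_eigenvalue m -> m <= l.

(* multiplicity m(l) = dimension of the eigenspace {f | L f = l f};
   eigenspace (L^T) l has as row space {u | u *m L^T = l u} = {f^T | L f = l f}.
   (L is self-adjoint, hence diagonalizable, so this is also the algebraic multiplicity.) *)
Definition mult (l : R) : nat := \rank (eigenspace laplacian^T l).

Definition S_h k (c : 'I_n -> 'I_k) (h : 'cV[R]_n) (i j : 'I_k) : R :=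
  \sum_(v | c v == i) \sum_(w | c w == j) adj v w * h v 0 * h w 0.

Definition h_ij k (c : 'I_n -> 'I_k) (h : 'cV[R]_n) (i j : 'I_k) : 'cV[R]_n :=
  \col_v (if c v == i then h v 0 else if c v == j then - h v 0 else 0).

End Spectral.

Definition proper_strong_coloring n (G : ohg n) k (c : 'I_n -> 'I_k) : Prop :=
  forall e, e \in edges G -> forall v w, v \in e -> w \in e -> v != w -> c v != c w.

Definition is_strong_chromatic n (G : ohg n) (chi : nat) : Prop :=
  (exists c : 'I_n -> 'I_chi, proper_strong_coloring G c) /\
  (forall k (c : 'I_n -> 'I_k), proper_strong_coloring G c -> (chi <= k)%N).

From HB Require Import structures.
From mathcomp Require Import all_boot all_order all_algebra.
From mathcomp Require Import reals.
From mathcomp Require Import sesquilinear spectral complex.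
From mathcomp Require Import ring lra zify.
Set Implicit Arguments. Unset Strict Implicit. Unset Printing Implicit Defensive.
Import Order.TTheory GRing.Theory Num.Theory.
Local Open Scope ring_scope.
Local Open Scope sesquilinear_scope.

(* Let h be a lambda_1-eigenfunction, V_1, ..., V_chi the colour classes, and
   m_i := sum_(v in V_i) deg v h(v)^2.  Colour classes contain no edge, so
   <h_ij, h_ij> = m_i + m_j and <L h_ij, h_ij> = m_i + m_j + 2 S_ij, while
   <L h, h> = sum_i m_i - sum_(i,j) S_ij = lambda_1 sum_i m_i.  The Rayleigh bound
   <L f, f> <= lambda_N <f, f> makes every slack (lambda_N - 1)(m_i + m_j) - 2 S_ij
   nonnegative, and the slacks over all ordered pairs i <> j add up to
   2 (sum_i m_i) (chi (lambda_N - 1) - (lambda_N - lambda_1)) = 0.  So every h_ij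
   attains the Rayleigh maximum, hence is a lambda_N-eigenfunction, S_ij >= 0, and
   h cannot vanish on a colour class (that would force every m_j = 0).

   For the multiplicities, f |-> f_12 is injective on the lambda_1-eigenspace
   (nonzero eigenfunctions meet V_1) with values in the lambda_N-eigenspace, which
   also contains the chi - 1 independent functions h_1j; the two families only share
   the line through h_12, so m(lambda_N) >= m(lambda_1) + chi - 2.

   The Rayleigh bound is the spectral theorem for the real symmetric matrix
   D^(1/2) L D^(-1/2), deduced from the complex spectral theorem. *)

Section NormalQuadraticBound.
Variables (C : numClosedFieldType) (n : nat) (A : 'M[C]_n).
Hypothesis A_normal : A \is normalmx.
Local Notation P := (spectralmx A).
Local Notation d := (spectral_diag A).

Lemma spectralmxE : A = P^t* *m diag_mx d *m P.
Proof. by rewrite -invmx_unitary ?spectral_unitarymx //; apply/orthomx_spectralP. Qed.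

Lemma spectralmx_mulmx : P *m A = diag_mx d *m P.
Proof.
by rewrite {2}spectralmxE !mulmxA (unitarymxP (spectral_unitarymx A)) mul1mx.
Qed.

Lemma spectral_diag_eigenvalue k : eigenvalue A (d 0 k).
Proof.
apply/eigenvalueP; exists (row k P).
  by rewrite -row_mul spectralmx_mulmx mul_diag_mx; apply/rowP => j; rewrite !mxE.
apply/eqP => Pk0; have := row_mul k P (P^t*).
rewrite (unitarymxP (spectral_unitarymx A)) Pk0 mul0mx => /rowP /(_ k).
by rewrite !mxE eqxx => /eqP; rewrite oner_eq0.
Qed.

Lemma normal_quad_le (c : C) : (forall k, d 0 k <= c) ->
  forall u : 'rV[C]_n, (u *m A *m u^t*) 0 0 <= c * (u *m u^t*) 0 0.
Proof.
move=> d_le u; have PU := spectral_unitarymx A.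
have -> : u *m u^t* = (u *m P^t*) *m (u *m P^t*)^t*.
  by rewrite trmx_mul map_mxM trmxCK mulmxA -(mulmxA u) (mulmx1C (unitarymxP PU)) mulmx1.
rewrite {1}spectralmxE !mulmxA; set z := u *m P^t*.
have -> : z *m diag_mx d *m P *m u^t* = z *m diag_mx d *m z^t*.
  by rewrite -mulmxA /z trmx_mul map_mxM trmxCK.
rewrite mul_mx_diag !mxE mulr_sumr -subr_ge0 -sumrB.
apply: sumr_ge0 => k _; rewrite !mxE; set x := \sum_j _.
rewrite [x * _ * _]mulrAC [c * _]mulrC -mulrBr.
by rewrite mulr_ge0 ?subr_ge0 // mul_conjC_ge0.
Qed.

End NormalQuadraticBound.

Lemma realsym_quad_le (R : rcfType) n (B : 'M[R]_n) (lam : R) :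
  B^T = B -> (forall mu, eigenvalue B mu -> mu <= lam) ->
  forall x : 'cV[R]_n, (x^T *m B *m x) 0 0 <= lam * (x^T *m x) 0 0.
Proof.
move=> BT lam_ge x; set Bc := map_mx (real_complex R) B.
have Bherm : Bc \is hermsymmx.
  apply: realsym_hermsym.
    apply/is_hermitianmxP; rewrite expr0 scale1r; apply/matrixP => i j.
    by rewrite !mxE /= -[in RHS]BT mxE.
  by apply/mxOverP => i j; rewrite mxE; apply/complex_realP; exists (B i j).
have Bnormal := hermitian_normalmx Bherm.
have d_le k : spectral_diag Bc 0 k <= real_complex R lam.
  have := spectral_diag_eigenvalue Bnormal k.
  have /complex_realP [mu ->] := mxOverP (hermitian_spectral_diag_real Bherm) 0 k.
  by rewrite eigenvalue_map lecR => /lam_ge.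
have := normal_quad_le Bnormal d_le (map_mx (real_complex R) x^T).
have -> : (map_mx (real_complex R) x^T)^t* = map_mx (real_complex R) x.
  by apply/matrixP => i j; rewrite !mxE; apply/CrealP/complex_realP; exists (x i j).
rewrite /Bc -!map_mxM.
by rewrite ![map_mx _ _ 0 0]mxE -rmorphM lecR.
Qed.

Lemma quad_formE (R : comPzRingType) n (M : 'M[R]_n) (x : 'cV[R]_n) :
  (x^T *m M *m x) 0 0 = \sum_v \sum_w x v 0 * M v w * x w 0.
Proof.
rewrite mxE; under eq_bigr => w _ do rewrite mxE mulr_suml.
by rewrite exchange_big; apply: eq_bigr => v _; apply: eq_bigr => w _; rewrite !mxE.
Qed.

Lemma cV_sqnormE (R : comPzRingType) n (y : 'cV[R]_n) : (y^T *m y) 0 0 = \sum_i y i 0 ^+ 2.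
Proof. by rewrite mxE; apply: eq_bigr => i _; rewrite mxE expr2. Qed.

Lemma cV_sqnorm_ge0 (R : realDomainType) n (y : 'cV[R]_n) : 0 <= (y^T *m y) 0 0.
Proof. by rewrite cV_sqnormE sumr_ge0 // => i _; rewrite sqr_ge0. Qed.

Lemma cV_sqnorm_eq0 (R : realDomainType) n (y : 'cV[R]_n) : (y^T *m y) 0 0 = 0 -> y = 0.
Proof.
rewrite cV_sqnormE => /eqP; rewrite psumr_eq0 => [/allP y0|i _]; last exact: sqr_ge0.
by apply/colP => i; have := y0 i (mem_index_enum i); rewrite mxE sqrf_eq0 => /eqP.
Qed.

(* Minimizing [t |-> (x - t C x)^T C (x - t C x) >= 0] forces [|C x|^2 = 0]. *)
Lemma psd_quad_eq0 (R : realFieldType) n (C : 'M[R]_n) : C^T = C ->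
  (forall x : 'cV_n, 0 <= (x^T *m C *m x) 0 0) ->
  forall x : 'cV_n, (x^T *m C *m x) 0 0 = 0 -> C *m x = 0.
Proof.
move=> CT C_psd x qx0; set y := C *m x; apply: cV_sqnorm_eq0.
set Y := (y^T *m y) 0 0; set Q := (y^T *m C *m y) 0 0.
have xCy : (x^T *m C *m y) 0 0 = Y.
  by rewrite /Y /y trmx_mul CT mulmxA.
have Y_ge0 : 0 <= Y := cV_sqnorm_ge0 y.
have Q_ge0 : 0 <= Q := C_psd y.
have yCx : (y^T *m C *m x) 0 0 = Y by rewrite -mulmxA.
have key t : 0 <= t ^+ 2 * Q - 2 * t * Y.
  have := C_psd (x - t *: y).
  rewrite [(x - _)^T]linearB /= [(t *: y)^T]linearZ /= !mulmxBl !mulmxBr.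
  rewrite -!scalemxAl -!scalemxAr scalerA.
  move: qx0 xCy yCx; rewrite /Y /Q !mxE => -> -> ->; lra.
have := key (Y / (Q + 1)); set t := Y / (Q + 1) => key_t.
have tQ : t * (Q + 1) = Y by rewrite /t mulfVK // lt0r_neq0 // ltr_pwDr.
have t_ge0 : 0 <= t by rewrite /t divr_ge0 // addr_ge0.
nra.
Qed.

Section Laplacian.
Variables (R : realType) (n : nat) (G : ohg n).
Hypothesis G_wf : wf_ohg G.
Local Notation A := (adj R G).
Local Notation L := (laplacian R G).
Local Notation degR v := ((deg G v)%:R : R).

Lemma adj_tr : A^T = A.
Proof.
apply/matrixP => v w; rewrite !mxE eq_sym; case: eqP => // _.
congr (_%:R - _%:R); apply: eq_card => e; rewrite !inE.
  case: (e \in edges G) (v \in e) (w \in e) => [] [] [] //=.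
  by apply/eqP/eqP => ->; rewrite opprK.
by case: (e \in edges G) (v \in e) (w \in e) => [] [] [] //=; rewrite eq_sym.
Qed.

Lemma adjC v w : A v w = A w v.
Proof. by rewrite -{1}adj_tr [LHS]mxE. Qed.

Lemma deg_gt0 v : 0 < degR v.
Proof. by case: G_wf => _ [_ deg_ge1]; rewrite ltr0n. Qed.

Lemma invmx_degmx : invmx (degmx R G) = diag_mx (\row_v (degR v)^-1).
Proof.
have DV : diag_mx (\row_v (degR v)^-1) *m degmx R G = 1%:M.
  rewrite /degmx mulmx_diag; apply/matrixP => v w; rewrite !mxE.
  by rewrite mulVf // lt0r_neq0 // deg_gt0.
have [_ D_unit] := mulmx1_unit DV.
by rewrite -[LHS]mul1mx -DV mulmxK.
Qed.

Lemma laplacianE v w : L v w = (v == w)%:R - A v w / degR v.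
Proof.
by rewrite /laplacian invmx_degmx mul_diag_mx !mxE mulrC.
Qed.

Lemma ip_laplacian (f : 'cV[R]_n) : ip G (L *m f) f = ip G f f - (f^T *m A *m f) 0 0.
Proof.
rewrite quad_formE /ip -sumrB; apply: eq_bigr => v _.
rewrite mxE; under eq_bigr => w _ do rewrite laplacianE mulrBl.
rewrite sumrB (bigD1 v) //= big1 => [|w /negPf wv]; last by rewrite eq_sym wv mul0r.
rewrite eqxx mul1r addr0 mulrBr mulrBl; congr (_ - _).
rewrite mulr_sumr mulr_suml; apply: eq_bigr => w _.
by field; rewrite lt0r_neq0 ?deg_gt0.
Qed.

Definition sqrt_deg v : R := Num.sqrt (degR v).

Definition sqrt_degmx : 'M[R]_n := diag_mx (\row_v sqrt_deg v).

(* D^(1/2) L D^(-1/2), symmetric because L is self-adjoint for [ip G]. *)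
Definition sym_laplacian : 'M[R]_n :=
  \matrix_(v, w) ((v == w)%:R - A v w / (sqrt_deg v * sqrt_deg w)).

Lemma sqrt_deg_gt0 v : 0 < sqrt_deg v.
Proof. by rewrite sqrtr_gt0 deg_gt0. Qed.

Lemma sqrt_deg_sqr v : sqrt_deg v * sqrt_deg v = degR v.
Proof. by rewrite -expr2 sqr_sqrtr ?ler0n. Qed.

Lemma sqrt_degmx_unit : sqrt_degmx \in unitmx.
Proof.
rewrite unitmxE det_diag unitfE prodf_seq_neq0.
by apply/allP => v _; rewrite mxE lt0r_neq0 ?sqrt_deg_gt0.
Qed.

Lemma sym_laplacian_tr : sym_laplacian^T = sym_laplacian.
Proof.
apply/matrixP => v w; rewrite [LHS]mxE /sym_laplacian [LHS]mxE [RHS]mxE.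
by rewrite eq_sym [sqrt_deg w * _]mulrC adjC.
Qed.

Lemma sym_laplacian_sqrt_degmx : sym_laplacian *m sqrt_degmx = sqrt_degmx *m L.
Proof.
apply/matrixP => v w; rewrite mul_mx_diag mul_diag_mx [LHS]mxE [RHS]mxE laplacianE.
rewrite /sym_laplacian [X in X * _]mxE; set a := A v w; rewrite !mxE -sqrt_deg_sqr.
have sv := sqrt_deg_gt0 v; have sw := sqrt_deg_gt0 w.
case: eqP => [<-|_]; rewrite {}/a; first exact: mulrC.
by rewrite mulr0n !sub0r; field; rewrite !lt0r_neq0.
Qed.

Lemma ip_sqrt_degmx (f g : 'cV[R]_n) :
  ip G f g = ((sqrt_degmx *m g)^T *m (sqrt_degmx *m f)) 0 0.
Proof.
rewrite /ip mxE; apply: eq_bigr => v _.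
by rewrite !mul_diag_mx !mxE -sqrt_deg_sqr; ring.
Qed.

Lemma ip_laplacian_sym (f : 'cV[R]_n) : ip G (L *m f) f =
  ((sqrt_degmx *m f)^T *m sym_laplacian *m (sqrt_degmx *m f)) 0 0.
Proof.
rewrite ip_sqrt_degmx [sqrt_degmx *m (L *m f)]mulmxA -sym_laplacian_sqrt_degmx.
by rewrite -[sym_laplacian *m _ *m f]mulmxA mulmxA.
Qed.

Lemma sqrt_degmx_laplacian_eigen (f : 'cV[R]_n) mu :
  sym_laplacian *m (sqrt_degmx *m f) = mu *: (sqrt_degmx *m f) -> L *m f = mu *: f.
Proof.
move=> Sf; apply: (can_inj (mulKmx sqrt_degmx_unit)).
by rewrite mulmxA -sym_laplacian_sqrt_degmx -mulmxA Sf scalemxAr.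
Qed.

Lemma sym_laplacian_eigenvalue mu : eigenvalue sym_laplacian mu -> is_eigenvalue G mu.
Proof.
case/eigenvalueP => u uL u_neq0; set f := invmx sqrt_degmx *m u^T.
have Sf : sqrt_degmx *m f = u^T by rewrite mulKVmx ?sqrt_degmx_unit.
exists f; split.
  by apply: contraNneq u_neq0 => f0; rewrite -trmx_eq0 -Sf f0 mulmx0.
apply: sqrt_degmx_laplacian_eigen; rewrite Sf.
by rewrite -sym_laplacian_tr -trmx_mul uL linearZ.
Qed.

Lemma ipZl a (f g : 'cV[R]_n) : ip G (a *: f) g = a * ip G f g.
Proof. by rewrite /ip mulr_sumr; apply: eq_bigr => v _; rewrite mxE; ring. Qed.

Lemma ip_self_eq0 (f : 'cV[R]_n) : ip G f f = 0 -> f = 0.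
Proof.
rewrite ip_sqrt_degmx => /cV_sqnorm_eq0 Sf0.
by rewrite -(mulKmx sqrt_degmx_unit f) Sf0 mulmx0.
Qed.

Section MaxEigenvalue.
Variable lN : R.
Hypothesis lN_max : is_max_eigenvalue G lN.

Lemma sym_laplacian_quad_le (x : 'cV[R]_n) :
  (x^T *m sym_laplacian *m x) 0 0 <= lN * (x^T *m x) 0 0.
Proof.
apply: realsym_quad_le sym_laplacian_tr _ x => mu /sym_laplacian_eigenvalue.
exact: lN_max.2.
Qed.

Lemma ip_laplacian_le (f : 'cV[R]_n) : ip G (L *m f) f <= lN * ip G f f.
Proof. rewrite ip_laplacian_sym ip_sqrt_degmx; exact: sym_laplacian_quad_le. Qed.

Lemma laplacian_eigen_of_ip_eq (f : 'cV[R]_n) :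
  ip G (L *m f) f = lN * ip G f f -> L *m f = lN *: f.
Proof.
move=> f_max; apply: sqrt_degmx_laplacian_eigen.
set C := lN%:M - sym_laplacian.
have CE (x : 'cV_n) :
    (x^T *m C *m x) 0 0 = lN * (x^T *m x) 0 0 - (x^T *m sym_laplacian *m x) 0 0.
  by rewrite /C mulmxBr mulmxBl mul_mx_scalar -scalemxAl !mxE.
have C_psd (x : 'cV_n) : 0 <= (x^T *m C *m x) 0 0.
  by rewrite CE subr_ge0; apply: sym_laplacian_quad_le.
have CT : C^T = C by rewrite /C linearB /= tr_scalar_mx sym_laplacian_tr.
have := psd_quad_eq0 CT C_psd (x := sqrt_degmx *m f).
rewrite CE -ip_laplacian_sym -ip_sqrt_degmx f_max subrr => /(_ erefl).
by rewrite /C mulmxBl mul_scalar_mx => /eqP; rewrite subr_eq0 => /eqP.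
Qed.

End MaxEigenvalue.

End Laplacian.

Section ColorClasses.
Variables (R : realType) (n : nat) (G : ohg n) (k : nat) (c : 'I_n -> 'I_k).
Local Notation A := (adj R G).

Definition class_mass (h : 'cV[R]_n) (i : 'I_k) : R :=
  \sum_(v | c v == i) (deg G v)%:R * h v 0 ^+ 2.

Definition class_scale (s : 'I_k -> R) : 'M[R]_n := diag_mx (\row_v s (c v)).

Definition pair_sign (i j l : 'I_k) : R := if l == i then 1 else if l == j then -1 else 0.

Lemma class_mass_ge0 (h : 'cV[R]_n) i : 0 <= class_mass h i.
Proof. by apply: sumr_ge0 => v _; rewrite mulr_ge0 ?ler0n ?sqr_ge0. Qed.

Lemma sum_by_class (F : 'I_n -> R) : \sum_v F v = \sum_i \sum_(v | c v == i) F v.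
Proof. exact: partition_big. Qed.

Lemma h_ijE (h : 'cV[R]_n) i j : h_ij c h i j = class_scale (pair_sign i j) *m h.
Proof.
apply/colP => v; rewrite mul_diag_mx !mxE /pair_sign.
by case: (c v == i); case: (c v == j); rewrite ?mul1r ?mulN1r ?mul0r.
Qed.

Lemma class_scale1 : class_scale (fun=> 1) = 1%:M.
Proof. by apply/matrixP => v w; rewrite !mxE. Qed.

Lemma ip_class_scale s (h : 'cV[R]_n) :
  ip G (class_scale s *m h) (class_scale s *m h) = \sum_i s i ^+ 2 * class_mass h i.
Proof.
rewrite /ip (sum_by_class); apply: eq_bigr => i _; rewrite mulr_sumr.
by apply: eq_bigr => v /eqP cv; rewrite mul_diag_mx !mxE cv; ring.
Qed.

Lemma quad_adj_class_scale s (h : 'cV[R]_n) :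
  ((class_scale s *m h)^T *m A *m (class_scale s *m h)) 0 0 =
    \sum_i \sum_j s i * s j * S_h G c h i j.
Proof.
rewrite quad_formE (sum_by_class); apply: eq_bigr => i _.
under eq_bigr => v _ do rewrite (sum_by_class).
rewrite exchange_big; apply: eq_bigr => j _; rewrite /S_h mulr_sumr.
apply: eq_bigr => v /eqP cv; rewrite mulr_sumr; apply: eq_bigr => w /eqP cw.
by rewrite !mul_diag_mx !mxE cv cw; ring.
Qed.

Lemma S_hC (h : 'cV[R]_n) i j : S_h G c h i j = S_h G c h j i.
Proof.
rewrite /S_h exchange_big; apply: eq_bigr => w _; apply: eq_bigr => v _.
by rewrite adjC; ring.
Qed.

Lemma sum_pair_sign i j (F : 'I_k -> R) : i != j ->
  \sum_l pair_sign i j l * F l = F i - F j.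
Proof.
move=> ij; rewrite (bigD1 i) //= (bigD1 j) 1?eq_sym //= big1 => [|l /andP [li lj]].
  by rewrite /pair_sign eqxx eq_sym (negbTE ij) eqxx mul1r mulN1r addr0.
by rewrite /pair_sign (negbTE li) (negbTE lj) mul0r.
Qed.

Lemma ip_h_ij (h : 'cV[R]_n) i j : i != j ->
  ip G (h_ij c h i j) (h_ij c h i j) = class_mass h i + class_mass h j.
Proof.
move=> ij; rewrite h_ijE ip_class_scale.
under eq_bigr => l _ do rewrite expr2 -mulrA.
rewrite sum_pair_sign //.
by rewrite /pair_sign eqxx eq_sym (negbTE ij) eqxx; ring.
Qed.

Hypothesis c_proper : proper_strong_coloring G c.

Lemma adj_same_class v w : c v = c w -> A v w = 0.
Proof.
move=> cvw; rewrite mxE; case: eqP => // /eqP vw.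
have no_edge P : [set e in edges G | [&& v \in e, w \in e & P e]] = set0.
  apply/setP => e; rewrite !inE; apply/negP => /and4P [eG ve we _].
  by move: (c_proper eG ve we vw); rewrite cvw eqxx.
by rewrite !no_edge !cards0 subrr.
Qed.

Lemma S_h_same (h : 'cV[R]_n) i : S_h G c h i i = 0.
Proof.
rewrite /S_h big1 // => v /eqP cv; rewrite big1 // => w /eqP cw.
by rewrite adj_same_class ?mul0r // cv cw.
Qed.

Lemma quad_adj_h_ij (h : 'cV[R]_n) i j : i != j ->
  ((h_ij c h i j)^T *m A *m h_ij c h i j) 0 0 = - (2 * S_h G c h i j).
Proof.
move=> ij; rewrite h_ijE quad_adj_class_scale.
under eq_bigr => l _ do under eq_bigr => m _ do rewrite -mulrA.
under eq_bigr => l _ do rewrite -mulr_sumr sum_pair_sign //.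
by rewrite sum_pair_sign // !S_h_same (S_hC h j i); ring.
Qed.

End ColorClasses.

Lemma sumr_except (R : zmodType) k (i : 'I_k) (F : 'I_k -> R) :
  \sum_(j | j != i) F j = \sum_j F j - F i.
Proof. by rewrite [X in _ = X - _](bigD1 i) //= addrC addrK. Qed.

Section ExtremalChromatic.
Variables (R : realType) (n : nat) (G : ohg n) (k : nat) (c : 'I_n -> 'I_k).
Variables (l1 lN : R) (h : 'cV[R]_n).
Hypotheses (G_wf : wf_ohg G) (lN_max : is_max_eigenvalue G lN).
Hypothesis c_proper : proper_strong_coloring G c.
Hypothesis chi_extremal : k%:R * (lN - 1) = lN - l1.
Hypothesis h_eigen : laplacian R G *m h = l1 *: h.
Local Notation L := (laplacian R G).
Local Notation h_ij := (h_ij c h).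
Local Notation mass := (class_mass G c h).
Local Notation S := (S_h G c h).

Definition pair_slack i j : R :=
  lN * ip G (h_ij i j) (h_ij i j) - ip G (L *m h_ij i j) (h_ij i j).

Lemma pair_slack_ge0 i j : 0 <= pair_slack i j.
Proof. by rewrite subr_ge0; apply: ip_laplacian_le. Qed.

Lemma pair_slackE i j : i != j -> pair_slack i j = (lN - 1) * (mass i + mass j) - 2 * S i j.
Proof.
by move=> ij; rewrite /pair_slack ip_laplacian // quad_adj_h_ij // ip_h_ij //; ring.
Qed.

Lemma sum_class_mass : ip G h h = \sum_i mass i.
Proof.
rewrite -[in LHS](mul1mx h) -(class_scale1 R c) ip_class_scale.
by apply: eq_bigr => i _; rewrite expr1n mul1r.
Qed.

Lemma sum_S_h : \sum_i \sum_j S i j = (1 - l1) * \sum_i mass i.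
Proof.
have := ip_laplacian G_wf h; rewrite h_eigen ipZl sum_class_mass.
rewrite -[in X in _ - X](mul1mx h) -(class_scale1 R c) quad_adj_class_scale.
under [in X in _ - X]eq_bigr => i _ do under eq_bigr => j _ do rewrite !mul1r.
by move=> E; lra.
Qed.

(* The extremal value of chi is exactly what makes the total slack vanish. *)
Lemma sum_pair_slack : \sum_i \sum_(j | j != i) pair_slack i j = 0.
Proof.
set M := \sum_i mass i.
pose F i j := (lN - 1) * mass i + (lN - 1) * mass j - 2 * S i j.
have -> : \sum_i \sum_(j | j != i) pair_slack i j = \sum_i \sum_j F i j - \sum_i F i i.
  rewrite -sumrB; apply: eq_bigr => i _; rewrite -sumr_except.
  by apply: eq_bigr => j ji; rewrite pair_slackE 1?eq_sym // /F mulrDr.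
have -> : \sum_i F i i = 2 * (lN - 1) * M.
  by rewrite /M mulr_sumr; apply: eq_bigr => i _; rewrite /F S_h_same //; ring.
have -> : \sum_i \sum_j F i j = 2 * k%:R * (lN - 1) * M - 2 * (1 - l1) * M.
  rewrite /F; under eq_bigr => i _ do
    rewrite sumrB big_split /= sumr_const card_ord -mulr_sumr.
  rewrite sumrB big_split /= sumr_const card_ord sumrMnl -mulr_sumr -/M.
  under eq_bigr => i _ do rewrite -mulr_sumr.
  by rewrite -mulr_sumr sum_S_h -/M -[(lN - 1) * M *+ k]mulr_natr; ring.
transitivity (2 * M * (k%:R * (lN - 1) - (lN - l1))); first ring.
by rewrite chi_extremal subrr mulr0.
Qed.

Lemma pair_slack_eq0 i j : i != j -> pair_slack i j = 0.
Proof.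
move=> ij.
have row_ge0 l : 0 <= \sum_(m | m != l) pair_slack l m.
  by apply: sumr_ge0 => m _; apply: pair_slack_ge0.
have row_i0 := psumr_eq0P (fun l _ => row_ge0 l) sum_pair_slack (i := i) isT.
by apply: (psumr_eq0P (fun m _ => pair_slack_ge0 i m) row_i0); rewrite eq_sym.
Qed.

Lemma laplacian_h_ij i j : i != j -> L *m h_ij i j = lN *: h_ij i j.
Proof.
move=> /pair_slack_eq0 /eqP; rewrite subr_eq0 eq_sym => /eqP.
exact: laplacian_eigen_of_ip_eq.
Qed.

Lemma S_h_pair i j : i != j -> 2 * S i j = (lN - 1) * (mass i + mass j).
Proof. by move=> ij; have := pair_slack_eq0 ij; rewrite pair_slackE //; lra. Qed.

Hypothesis lN_gt1 : 1 < lN.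

Lemma eigen_vanishing_on_class_eq0 i : (forall v, c v = i -> h v 0 = 0) -> h = 0.
Proof.
move=> h_i0.
have mass_i : mass i = 0.
  by rewrite /class_mass big1 // => v /eqP /h_i0 ->; rewrite expr2 !mulr0.
have S_i j : S i j = 0.
  by rewrite /S_h big1 // => v /eqP /h_i0 hv; rewrite big1 // => w _; rewrite hv mulr0 mul0r.
have mass_j j : mass j = 0.
  have [<- // | ij] := eqVneq i j; have := S_h_pair ij.
  rewrite mass_i S_i add0r mulr0 => /esym /eqP; rewrite mulf_eq0 subr_eq0 gt_eqF //=.
  by move/eqP.
by apply: (ip_self_eq0 G_wf); rewrite sum_class_mass big1.
Qed.

Lemma S_h_ge0 i j : i != j -> 0 <= S i j.
Proof.
move=> ij; have := S_h_pair ij.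
have : 0 <= (lN - 1) * (mass i + mass j).
  by apply: mulr_ge0; [rewrite subr_ge0 ltW | rewrite addr_ge0 ?class_mass_ge0].
lra.
Qed.

Hypothesis h_neq0 : h != 0.

Lemma eigen_support_meets_class i : exists v, h v 0 != 0 /\ c v = i.
Proof.
have [/existsP [v /andP [hv /eqP cv]] | /existsPn h_i0] :=
  boolP [exists v, (h v 0 != 0) && (c v == i)]; first by exists v.
case/eqP: h_neq0; apply: (@eigen_vanishing_on_class_eq0 i) => v cv.
by have := h_i0 v; rewrite cv eqxx andbT negbK => /eqP.
Qed.

Lemma class_mass_gt0 i : 0 < mass i.
Proof.
have [v [hv cv]] := eigen_support_meets_class i.
rewrite /class_mass (bigD1 v) /=; last by rewrite cv.
have v_gt0 : 0 < (deg G v)%:R * h v 0 ^+ 2.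
  by apply: mulr_gt0; [exact: deg_gt0 | rewrite exprn_even_gt0].
have rest_ge0 : 0 <= \sum_(w | (c w == i) && (w != v)) (deg G w)%:R * h w 0 ^+ 2.
  by apply: sumr_ge0 => w _; rewrite mulr_ge0 ?ler0n ?sqr_ge0.
lra.
Qed.

Lemma h_ij_eigenfun i j : i != j -> is_eigenfun G (h_ij i j) lN.
Proof.
move=> ij; split; last exact: laplacian_h_ij.
have [v [hv cv]] := eigen_support_meets_class i.
by apply: contraNneq hv => /colP /(_ v); rewrite !mxE cv eqxx => ->.
Qed.

Lemma RQ_h_ij i j : i != j -> RQ G (h_ij i j) = lN.
Proof.
move=> ij; rewrite /RQ laplacian_h_ij // ipZl mulfK // ip_h_ij //.
by rewrite lt0r_neq0 // addr_gt0 ?class_mass_gt0.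
Qed.

End ExtremalChromatic.

Lemma extremal_chi_formula (R : realFieldType) k (l1 lN : R) : (1 < k)%N ->
  k%:R * (lN - 1) = lN - l1 -> lN = (k%:R - l1) / (k%:R - 1).
Proof.
move=> k_gt1 chi_eq; have k_ge2 : 2 <= k%:R :> R by rewrite ler_nat.
have -> : k%:R - l1 = lN * (k%:R - 1) by lra.
by rewrite mulfK // subr_eq0 gt_eqF //; lra.
Qed.

Lemma sub_eigenspace_trP (F : fieldType) n (g : 'M[F]_n) a m (W : 'M[F]_(m, n)) :
  reflect (g *m W^T = a *: W^T) (W <= eigenspace g^T a)%MS.
Proof.
by apply: (iffP eigenspaceP) => E; apply: trmx_inj; rewrite trmx_mul trmxK E linearZ /= ?trmxK.
Qed.

Section MaxMultiplicity.
Variables (R : realType) (n : nat) (G : ohg n) (k : nat) (c : 'I_n -> 'I_k).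
Variables (l1 lN : R) (h : 'cV[R]_n).
Hypotheses (G_wf : wf_ohg G) (lN_max : is_max_eigenvalue G lN).
Hypothesis c_proper : proper_strong_coloring G c.
Hypothesis chi_extremal : k%:R * (lN - 1) = lN - l1.
Hypothesis lN_gt1 : 1 < lN.
Hypotheses (h_eigen : laplacian R G *m h = l1 *: h) (h_neq0 : h != 0).
Variables (i0 : 'I_k) (j1 : 'I_k.-1).
Local Notation L := (laplacian R G).
Local Notation i1 := (lift i0 j1).

Local Notation lN_h_ij f_eigen :=
  (laplacian_h_ij G_wf lN_max c_proper chi_extremal f_eigen).
Local Notation support_h :=
  (eigen_support_meets_class G_wf lN_max c_proper chi_extremal h_eigen lN_gt1 h_neq0).

(* The eigenspaces in [mult] are spanned by rows f^T; on them f |-> f_(i0 i1)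
   acts by right multiplication with this diagonal matrix. *)
Definition class_pair_mx : 'M[R]_n := class_scale c (pair_sign R i0 i1).

Definition h_ij_rows : 'M[R]_(k.-1, n) := \matrix_(j, v) h_ij c h i0 (lift i0 j) v 0.

Lemma row_h_ij_rows j : (row j h_ij_rows)^T = h_ij c h i0 (lift i0 j).
Proof. by apply/colP => v; rewrite !mxE. Qed.

Lemma h_ij_rows_sub : (h_ij_rows <= eigenspace L^T lN)%MS.
Proof.
apply/row_subP => j; apply/sub_eigenspace_trP; rewrite row_h_ij_rows.
by apply: (lN_h_ij h_eigen); apply: neq_lift.
Qed.

Lemma mul_h_ij_rows_class (a : 'rV[R]_k.-1) j v : c v = lift i0 j ->
  (a *m h_ij_rows) 0 v = - (a 0 j * h v 0).
Proof.
move=> cv; rewrite mxE (bigD1 j) //= big1 => [|l lj]; rewrite !mxE cv.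
  by rewrite eq_sym (negbTE (neq_lift _ _)) eqxx addr0 mulrN.
by rewrite eq_sym (negbTE (neq_lift _ _)) (inj_eq lift_inj) eq_sym (negbTE lj) mulr0.
Qed.

Lemma mul_h_ij_rows_eq0 (a : 'rV[R]_k.-1) j v : c v = lift i0 j -> h v 0 != 0 ->
  (a *m h_ij_rows) 0 v = 0 -> a 0 j = 0.
Proof.
move=> cv hv; rewrite (mul_h_ij_rows_class _ cv) => /eqP.
by rewrite oppr_eq0 mulf_eq0 (negbTE hv) orbF => /eqP.
Qed.

Lemma h_ij_rows_free : row_free h_ij_rows.
Proof.
apply: inj_row_free => a aH0; apply/rowP => j; rewrite mxE.
have [v [hv cv]] := support_h (lift i0 j).
by apply: (mul_h_ij_rows_eq0 cv hv); rewrite aH0 mxE.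
Qed.

Local Notation E1 := (eigenspace L^T l1).
Local Notation D := class_pair_mx.

Lemma h_ij_class_pair (f : 'cV[R]_n) : h_ij c f i0 i1 = D *m f.
Proof. exact: h_ijE. Qed.

Lemma mul_class_pair_mx (x : 'rV[R]_n) v : (x *m D) 0 v = x 0 v * pair_sign R i0 i1 (c v).
Proof. by rewrite mul_mx_diag !mxE. Qed.

Lemma scaled_eigenspace_sub : (E1 *m D <= eigenspace L^T lN)%MS.
Proof.
apply/row_subP => r; rewrite row_mul; apply/sub_eigenspace_trP.
have /sub_eigenspace_trP x_eigen := row_sub r E1.
rewrite trmx_mul tr_diag_mx -h_ij_class_pair.
exact: (lN_h_ij x_eigen) (neq_lift _ _).
Qed.

Lemma eigenspace_cap_ker_class_pair : \rank (E1 :&: kermx D) = 0%N.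
Proof.
apply/eqP; rewrite mxrank_eq0 -submx0; apply/row_subP => r; rewrite submx0.
set x := row r _; rewrite -trmx_eq0; apply/eqP.
have /sub_eigenspace_trP x_eigen : (x <= E1)%MS := submx_trans (row_sub r _) (capmxSl _ _).
have /sub_kermxP xD0 : (x <= kermx D)%MS := submx_trans (row_sub r _) (capmxSr _ _).
apply: (eigen_vanishing_on_class_eq0 G_wf lN_max c_proper chi_extremal x_eigen lN_gt1
          (i := i0)).
move=> v cv; have := congr1 (fun M : 'rV_n => M 0 v) xD0.
by rewrite mul_class_pair_mx cv /pair_sign eqxx mulr1 !mxE.
Qed.

Lemma rank_scaled_eigenspace : \rank (E1 *m D) = mult G l1.
Proof. by have := mxrank_mul_ker E1 D; rewrite eigenspace_cap_ker_class_pair addn0. Qed.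

Lemma scaled_eigenspace_cap_h_ij_rows : (E1 *m D :&: h_ij_rows <= (h_ij c h i0 i1)^T)%MS.
Proof.
apply/row_subP => r; set x := row r _.
have /submxP [a xE] : (x <= h_ij_rows)%MS := submx_trans (row_sub r _) (capmxSr _ _).
have /submxP [b xU] : (x <= E1 *m D)%MS := submx_trans (row_sub r _) (capmxSl _ _).
have x_off v : c v != i0 -> c v != i1 -> x 0 v = 0.
  move=> vi0 vi1; rewrite xU mulmxA mul_class_pair_mx /pair_sign.
  by rewrite (negbTE vi0) (negbTE vi1) mulr0.
have a_off l : l != j1 -> a 0 l = 0.
  move=> lj1; have [v [hv cv]] := support_h (lift i0 l).
  apply: (mul_h_ij_rows_eq0 cv hv); rewrite -xE x_off // cv ?(inj_eq lift_inj) //.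
  by rewrite eq_sym neq_lift.
rewrite xE mulmx_sum_row (bigD1 j1) //= big1 ?addr0 => [|l lj1].
  by rewrite scalemx_sub // -row_h_ij_rows trmxK.
by rewrite a_off ?scale0r.
Qed.

Lemma mult_max_ge : (mult G l1 + k.-1 <= (mult G lN).+1)%N.
Proof.
rewrite -rank_scaled_eigenspace -(eqP h_ij_rows_free) -mxrank_sum_cap -addn1 leq_add //.
  by apply: mxrankS; rewrite addsmx_sub scaled_eigenspace_sub h_ij_rows_sub.
exact: leq_trans (mxrankS scaled_eigenspace_cap_h_ij_rows) (rank_leq_row _).
Qed.

End MaxMultiplicity.

Lemma mult_gt0 (R : realType) n (G : ohg n) (f : 'cV[R]_n) mu :
  is_eigenfun G f mu -> (0 < mult G mu)%N.
Proof.
move=> [f_neq0 f_eigen].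
have f_sub : (f^T <= eigenspace (laplacian R G)^T mu)%MS.
  by apply/sub_eigenspace_trP; rewrite trmxK.
by rewrite (leq_trans _ (mxrankS f_sub)) // rank_rV trmx_eq0 f_neq0.
Qed.

Lemma proper_strong_coloring_gt1 (R : realType) n (G : ohg n) k (c : 'I_n -> 'I_k) :
  adj R G != 0 -> proper_strong_coloring G c -> (1 < k)%N.
Proof.
move=> /matrix0Pn [v [w Avw]] c_proper; rewrite -[k]card_ord; apply/card_gt1P.
exists (c v), (c w); split=> //; apply: contraNneq Avw => cvw.
by rewrite (adj_same_class R c_proper cvw).
Qed.

Lemma extremal_lN_gt1 (R : realFieldType) k (l1 lN : R) : (1 < k)%N -> l1 <= lN ->
  k%:R = (lN - l1) / (lN - 1) -> 1 < lN.
Proof.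
move=> k_gt1 l1_le chi_def; have k_ge2 : 2 <= k%:R :> R by rewrite ler_nat.
case: (ltrgtP lN 1) => // lN1.
  have : (lN - l1) / (lN - 1) <= 0 by rewrite mulr_ge0_le0 // ?invr_le0; lra.
  lra.
by move: chi_def; rewrite lN1 subrr invr0 mulr0; lra.
Qed.

Theorem mainTheorem3 (R : realType) (n : nat) (G : ohg n)
  (chi : nat) (l1 lN : R) :
  wf_ohg G ->
  adj R G != 0 ->
  is_strong_chromatic G chi ->
  is_min_eigenvalue G l1 ->
  is_max_eigenvalue G lN ->
  chi%:R = (lN - l1) / (lN - 1) ->
  (forall (h : 'cV[R]_n), is_eigenfun G h l1 ->
   forall c : 'I_n -> 'I_chi, proper_strong_coloring G c ->
     (forall i : 'I_chi, exists v, h v 0 != 0 /\ c v = i) /\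
     (forall i j : 'I_chi, (i < j)%N -> 0 <= S_h G c h i j) /\
     (forall i j : 'I_chi, (i < j)%N ->
        RQ G (h_ij c h i j) = lN /\ lN = (chi%:R - l1) / (chi%:R - 1) /\
        is_eigenfun G (h_ij c h i j) lN)) /\
  lN = (chi%:R - l1) / (chi%:R - 1) /\
  (chi.-1 <= mult G lN)%N /\
  ((1 < mult G l1)%N -> (chi.-1 < mult G lN)%N).
Proof.
move=> G_wf A_neq0 [[c0 c0_proper] _] l1_min lN_max chi_def.
have chi_gt1 := proper_strong_coloring_gt1 A_neq0 c0_proper.
have lN_gt1 := extremal_lN_gt1 chi_gt1 (l1_min.2 _ lN_max.1) chi_def.
have chi_eq : chi%:R * (lN - 1) = lN - l1 by rewrite chi_def mulfVK // subr_eq0 gt_eqF.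
have lN_formula := extremal_chi_formula chi_gt1 chi_eq.
have [h h_eigenfun] := l1_min.1; have [h_neq0 h_eigen] := h_eigenfun.
have mult_ge : (mult G l1 + chi.-1 <= (mult G lN).+1)%N.
  have chi_pos : (0 < chi.-1)%N by rewrite -ltnS prednK // ltnW.
  exact: (mult_max_ge G_wf lN_max c0_proper chi_eq lN_gt1 h_eigen h_neq0
                      (Ordinal (ltnW chi_gt1)) (Ordinal chi_pos)).
have := mult_gt0 h_eigenfun; split; last by split=> //; lia.
move=> f [f_neq0 f_eigen] c c_proper.
have ord_neq (i j : 'I_chi) : (i < j)%N -> i != j by move=> ij; rewrite neq_ltn ij.
have S_ge0 := S_h_ge0 G_wf lN_max c_proper chi_eq f_eigen lN_gt1.
have support := eigen_support_meets_class G_wf lN_max c_proper chi_eq f_eigen lN_gt1 f_neq0.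
have RQ_lN := RQ_h_ij G_wf lN_max c_proper chi_eq f_eigen lN_gt1 f_neq0.
have eigen_lN := h_ij_eigenfun G_wf lN_max c_proper chi_eq f_eigen lN_gt1 f_neq0.
split=> //; split=> i j /ord_neq ij; first exact: S_ge0.
by split; [exact: RQ_lN | split; [exact: lN_formula | exact: eigen_lN]].
Qed.
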